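(* For every $\varepsilon>0$ the series $$\sum_{\boldsymbol{\mathcal E}\in\operatorname{Div}_{\mathrm{eff}}(\mathscr C)^7}|\mu_S(\boldsymbol{\mathcal E})|\,q^{-(\frac12+\varepsilon)\left[\deg\mathcal E_0+\sum_{i=1}^3\deg\mathcal E_i+\sum_{i=1}^3\deg\mathcal F_i\right]}$$ converges.
   Context: $k$ is a finite field with $q$ elements, $\mathscr C$ a smooth projective geometrically integral curve over $k$, $\operatorname{Div}_{\mathrm{eff}}(\mathscr C)$ its monoid of effective divisors. Elements of $\operatorname{Div}_{\mathrm{eff}}(\mathscr C)^7$ are written $\boldsymbol{\mathcal E}=(\mathcal E_0,\mathcal E_1,\mathcal E_2,\mathcal E_3,\mathcal F_1,\mathcal F_2,\mathcal F_3)$. Let $\operatorname{Div}_{S,\mathrm{prim}}$ be the set of $\boldsymbol{\mathcal E}$ such that the gcd (at each closed point, the minimum of multiplicities) of the seven effective divisors $\sum_{j\neq i}\mathcal E_j+\sum_{j=1}^3\mathcal F_j$ ($i=1,2,3$), $\mathcal E_0+\sum_{j\neq i}(\mathcal E_j+\mathcal F_j)$ ($i=1,2,3$) and $\mathcal E_0+\sum_{j=1}^3\mathcal E_j$ is $0$ (indices $j$ in $\{1,2,3\}$). $\mu_S:\operatorname{Div}_{\mathrm{eff}}(\mathscr C)^7\to\mathbf C$ is the unique function with $\mathbf 1_{\operatorname{Div}_{S,\mathrm{prim}}}(\boldsymbol{\mathcal D})=\sum_{0\leq\boldsymbol{\mathcal E}\leq\boldsymbol{\mathcal D}}\mu_S(\boldsymbol{\mathcal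 E})$ for all $\boldsymbol{\mathcal D}$ (componentwise inequalities). *)

From HB Require Import structures.
From mathcomp Require Import all_boot all_order all_algebra all_field.
From mathcomp Require Import finmap.
From mathcomp Require Import boolp reals exp.
Set Implicit Arguments. Unset Strict Implicit. Unset Printing Implicit Defensive.
Import Order.TTheory GRing.Theory Num.Theory.

Local Open Scope ring_scope.
Local Open Scope fset_scope.

(* The curve is modelled through its set of closed points, a choiceType P,
   with a degree function deg : P -> nat. *)

Definition effdiv (P : choiceType) := {fsfun P -> nat with 0%N}.

Definition divdeg (P : choiceType) (deg : P -> nat) (D : effdiv P) : nat :=
  (\sum_(v <- finsupp D) D v * deg v)%N.

(* 7-tuples (E0,E1,E2,E3,F1,F2,F3) indexed 0..6 in this order. *)
Definition div7 (P : choiceType) := {ffun 'I_7 -> effdiv P}.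

Definition E0 {P : choiceType} (E : div7 P) := E (inord 0).
Definition Ei {P : choiceType} (E : div7 P) (i : nat) := E (inord i).       (* i = 1,2,3 *)
Definition Fi {P : choiceType} (E : div7 P) (i : nat) := E (inord (3 + i)). (* i = 1,2,3 *)

Definition div7_le (P : choiceType) (E D : div7 P) : Prop :=
  forall (k : 'I_7) (v : P), (E k v <= D k v)%N.

(* The seven effective divisors whose gcd must vanish, evaluated at v. *)
Definition prim_combos (P : choiceType) (E : div7 P) (v : P) : seq nat :=
  let e0 := E0 E v in
  let e i := Ei E i v in
  let f i := Fi E i v in
  [:: (\sum_(1 <= j < 4 | j != 1) e j + (f 1 + f 2 + f 3))%N;
      (\sum_(1 <= j < 4 | j != 2) e j + (f 1 + f 2 + f 3))%N;
      (\sum_(1 <= j < 4 | j != 3) e j + (f 1 + f 2 + f 3))%N;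
      (e0 + \sum_(1 <= j < 4 | j != 1) (e j + f j))%N;
      (e0 + \sum_(1 <= j < 4 | j != 2) (e j + f j))%N;
      (e0 + \sum_(1 <= j < 4 | j != 3) (e j + f j))%N;
      (e0 + (e 1 + e 2 + e 3))%N ].

(* E is in Div_{S,prim}: at every closed point the minimum of the
   multiplicities of the seven divisors is 0. *)
Definition prim7 (P : choiceType) (E : div7 P) : bool :=
  `[< forall v : P, 0%N \in prim_combos E v >].

(* mu satisfies the defining relation
   1_{prim}(D) = sum_{0 <= E <= D} mu(E) for all D
   (the finite range {E | E <= D} given by any duplicate-free enumeration). *)
Definition is_muS (R : realType) (P : choiceType) (mu : div7 P -> R) : Prop :=
  forall (D : div7 P) (s : seq (div7 P)), uniq s ->
    (forall E, E \in s <-> div7_le E D) ->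
    \sum_(E <- s) mu E = (prim7 D)%:R.

Definition totdeg (P : choiceType) (deg : P -> nat) (E : div7 P) : nat :=
  (\sum_(k < 7) divdeg deg (E k))%N.

(* Closed points of the curve: positive degrees, finitely many of each
   degree (enumerated by L d), and the point counts over F_{q^n} given by
   the Weil formula #C(F_{q^n}) = q^n + 1 - sum_i alpha_i^n, |alpha_i|^2 = q. *)
Definition curve_points (q : nat) (P : choiceType) (deg : P -> nat) : Prop :=
  (forall v, 0 < deg v)%N /\
  (forall d, exists s : seq P, uniq s /\ forall v, v \in s <-> deg v = d) /\
  exists (g : nat) (alpha : 'I_(2 * g) -> algC),
    (forall i, alpha i * (alpha i)^* = q%:R) /\
    forall (n : nat) (s : seq P), (0 < n)%N -> uniq s ->
      (forall v, v \in s <-> (deg v %| n)%N) ->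
      (\sum_(v <- s) deg v)%:R = (q ^ n)%:R + 1 - \sum_i alpha i ^+ n :> algC.

From mathcomp Require Import all_boot all_order all_algebra all_field.
From mathcomp Require Import finmap.
From mathcomp Require Import boolp reals sequences exp.
From mathcomp Require Import zify ring lra.
Import Order.TTheory GRing.Theory Num.Theory.
Set Implicit Arguments. Unset Strict Implicit. Unset Printing Implicit Defensive.

(* By Moebius inversion, mu(E) is the iterated difference of the indicator of
   primitivity in the directions of the "atoms" (k, v) with E_k(v) > 0, so
   |mu(E)| <= 2^(number of atoms).  The difference in a direction vanishes when
   decreasing that coordinate never changes primitivity; this happens if
   E_k(v) >= 2, or if v lies on exactly one of the seven components (each
   component is omitted by one of the seven gcd conditions).  Hence mu(E) <> 0
   forces E to be 0/1-valued with every point of its support on at least two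
   components, and then |mu(E)| x^(deg E) <= prod_v 2^7 x^(2 deg v).  Summing
   over all support patterns gives an Euler product bounded by
   exp(C sum_v x^(2 deg v)), which is finite because the Weil bound gives
   O(q^d) points of degree d and x^2 q = q^(-2 eps) < 1 for x = q^(-1/2-eps). *)

Section BoundedTuples.
Variable P : choiceType.
Local Open Scope fset_scope.

Lemma div7_ext (E D : div7 P) : (forall k v, E k v = D k v) -> E = D.
Proof. by move=> eqED; apply/ffunP => k; apply/fsfunP => v; apply: eqED. Qed.

Lemma div7_le_trans (X Y Z : div7 P) : div7_le X Y -> div7_le Y Z -> div7_le X Z.
Proof. by move=> leXY leYZ k v; apply: leq_trans (leXY k v) (leYZ k v). Qed.

Definition div7_supp (D : div7 P) : {fset P} :=
  \bigcup_(k <- enum 'I_7) finsupp (D k).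

Lemma mem_div7_supp (D : div7 P) k v : D k v != 0%N -> v \in div7_supp D.
Proof.
by move=> Dkv; apply/bigfcupP; exists k; rewrite ?mem_enum ?mem_finsupp.
Qed.

Definition div7_max (D : div7 P) : nat :=
  \max_(k < 7) \max_(v <- div7_supp D) D k v.

Lemma div7_le_max (D : div7 P) k v : (D k v <= div7_max D)%N.
Proof.
have [-> //|Dkv] := eqVneq (D k v) 0%N.
have := @leq_bigmax_seq _ (div7_supp D : seq P) predT (D k) v (mem_div7_supp Dkv) isT.
rewrite big_mkcond => /leq_trans; apply.
have := @leq_bigmax _ (fun k => \max_(v <- div7_supp D) D k v) k.
by rewrite big_mkcond.
Qed.

(* [is_muS] needs a duplicate-free enumeration of the tuples below [D]; they
   are images of the finite type of functions 'I_7 * supp D -> [0, max D]. *)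
Definition div7_of_box (D : div7 P)
    (f : {ffun 'I_7 * div7_supp D -> 'I_(div7_max D).+1}) : div7 P :=
  [ffun k => [fsfun v : div7_supp D => (val (f (k, v)) : nat) | 0%N]].

Lemma div7_of_boxE (D : div7 P)
    (f : {ffun 'I_7 * div7_supp D -> 'I_(div7_max D).+1}) k v : div7_of_box f k v =
  if insub v is Some u then val (f (k, u)) else 0%N.
Proof. by rewrite ffunE fsfun_ffun; case: insubP. Qed.

Definition div7_le_enum (D : div7 P) : seq (div7 P) :=
  undup [seq E <- map (@div7_of_box D) (enum {: {ffun _ -> _}}) | `[< div7_le E D >]].

Lemma div7_le_enum_uniq (D : div7 P) : uniq (div7_le_enum D).
Proof. exact: undup_uniq. Qed.

Lemma mem_div7_le_enum (D E : div7 P) : E \in div7_le_enum D <-> div7_le E D.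
Proof.
rewrite mem_undup mem_filter; split; first by case/andP => /asboolP.
move=> leED; rewrite (asboolT leED); apply/mapP.
exists [ffun kv => inord (E kv.1 (val kv.2))]; first by rewrite mem_enum.
apply: div7_ext => k v; rewrite div7_of_boxE; case: insubP => [u _ <-|vD].
  by rewrite ffunE /= inordK // ltnS (leq_trans (leED k _)) ?div7_le_max.
apply/eqP; rewrite -leqn0 (leq_trans (leED k v)) // leqn0.
by apply: contraNT vD => /mem_div7_supp ->.
Qed.

End BoundedTuples.

Section Decrement.
Variable P : choiceType.

Definition div7_dec (a : 'I_7 * P) (D : div7 P) : div7 P :=
  [ffun k => if k == a.1 then [fsfun D k with a.2 |-> (D k a.2).-1] else D k].

Lemma div7_decE a D k v :
  div7_dec a D k v = if (k, v) == a then (D k v).-1 else D k v.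
Proof.
case: a => k0 v0; rewrite ffunE xpair_eqE /=.
by case: eqP => [->|] //=; rewrite fsfun_withE; case: eqP => [->|].
Qed.

Lemma div7_decC a b D : div7_dec a (div7_dec b D) = div7_dec b (div7_dec a D).
Proof.
by apply: div7_ext => k v; rewrite !div7_decE; case: (_ == a); case: (_ == b).
Qed.

Lemma div7_dec_le a D : div7_le (div7_dec a D) D.
Proof. by move=> k v; rewrite div7_decE; case: ifP => // _; apply: leq_pred. Qed.

End Decrement.

Section FiniteDifferences.
Variables (P : choiceType) (R : numDomainType).
Local Open Scope ring_scope.

Fixpoint findiff (F : div7 P -> R) (D : div7 P) (L : seq ('I_7 * P)) : R :=
  if L is a :: L' then findiff F D L' - findiff F (div7_dec a D) L' else F D.

Lemma findiff_norm_le (F : div7 P -> R) D L :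
  (forall X, `|F X| <= 1) -> `|findiff F D L| <= 2 ^+ size L.
Proof.
move=> F_le1; elim: L D => [|a L IH] D /=; first by rewrite expr0.
apply: le_trans (ler_normB _ _) _.
by rewrite exprS mulr_natl mulr2n lerD.
Qed.

Lemma findiff_dec (F : div7 P -> R) a D L :
  findiff F (div7_dec a D) L = findiff (F \o div7_dec a) D L.
Proof. by elim: L D => [|b L IH] D //=; rewrite IH div7_decC IH. Qed.

Lemma eq_findiff (F G : div7 P -> R) D L :
    (forall X, div7_le X D ->
      (forall b, b \notin L -> X b.1 b.2 = D b.1 b.2) -> F X = G X) ->
  findiff F D L = findiff G D L.
Proof.
elim: L D => [|a L IH] D /= eqFG; first exact: eqFG.
congr (_ - _); apply: IH => X leXD agreeX; apply: eqFG => //.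
- by move=> b; rewrite inE negb_or => /andP[_ /agreeX].
- exact: div7_le_trans leXD (div7_dec_le a D).
- move=> b; rewrite inE negb_or => /andP[ba /agreeX ->].
  by rewrite div7_decE -surjective_pairing (negbTE ba).
Qed.

Lemma findiff_cons_eq0 (F : div7 P -> R) a D L : a \notin L ->
    (forall X, div7_le X D -> X a.1 a.2 = D a.1 a.2 -> F X = F (div7_dec a X)) ->
  findiff F D (a :: L) = 0.
Proof.
move=> aL Fa /=; rewrite findiff_dec (@eq_findiff F (F \o div7_dec a)) ?subrr //.
by move=> X leXD agreeX; apply: Fa => //; apply: agreeX.
Qed.

End FiniteDifferences.

Definition prim_indicator (R : numDomainType) (P : choiceType) (D : div7 P) : R :=
  (prim7 D)%:R.

Section MoebiusInversion.
Variables (P : choiceType) (R : realType) (mu : div7 P -> R).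
Hypothesis muS : is_muS mu.
Local Open Scope ring_scope.

Definition agrees_on (L : seq ('I_7 * P)) (E D : div7 P) : bool :=
  all (fun a => E a.1 a.2 == D a.1 a.2) L.

Definition mu_sum_agree (D : div7 P) (L : seq ('I_7 * P)) : R :=
  \sum_(E <- div7_le_enum D | agrees_on L E D) mu E.

Lemma mu_sum_agree_nil D : mu_sum_agree D [::] = prim_indicator R D.
Proof. exact/muS/mem_div7_le_enum/div7_le_enum_uniq. Qed.

(* The [E <= D] with [E a < D a] are exactly the [E <= D - a]. *)
Lemma mu_sum_agree_cons (a : 'I_7 * P) (L : seq ('I_7 * P)) (D : div7 P) :
    a \notin L -> (0 < D a.1 a.2)%N ->
  mu_sum_agree D (a :: L) = mu_sum_agree D L - mu_sum_agree (div7_dec a D) L.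
Proof.
move=> aL Da; apply/eqP; rewrite eq_sym subr_eq; apply/eqP.
rewrite /mu_sum_agree (bigID (fun E : div7 P => E a.1 a.2 == D a.1 a.2)) /=.
congr (_ + _); first by apply: eq_bigl => E; rewrite /agrees_on /= andbC.
rewrite -[LHS]big_filter -[RHS]big_filter; apply/perm_big/uniq_perm;
  rewrite ?filter_uniq ?div7_le_enum_uniq //.
have agree_dec E : agrees_on L E (div7_dec a D) = agrees_on L E D.
  apply: eq_in_all => -[k v] kvL /=; rewrite div7_decE.
  by case: ifP => // /eqP kva; rewrite -kva kvL in aL.
move=> E; rewrite !mem_filter agree_dec; case: (agrees_on L E D) => //=.
apply/idP/idP.
- case/andP=> Ea /mem_div7_le_enum leED; apply/mem_div7_le_enum => k v.
  rewrite div7_decE; case: ifP => [/eqP kva|_]; last exact: leED.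
  rewrite -kva /= in Ea; rewrite -ltnS prednK; last by rewrite -kva in Da.
  by rewrite ltn_neqAle Ea leED.
- move/mem_div7_le_enum => leE.
  rewrite (mem_div7_le_enum _ _).2; last exact: div7_le_trans leE (div7_dec_le a D).
  have := leE a.1 a.2; rewrite div7_decE -surjective_pairing eqxx andbT.
  by move: Da; case: (D a.1 a.2) => //= n _ le; rewrite ltn_eqF.
Qed.

Lemma mu_sum_agree_cover (L : seq ('I_7 * P)) (D : div7 P) :
  (forall k v, D k v != 0%N -> (k, v) \in L) -> mu_sum_agree D L = mu D.
Proof.
move=> DL; rewrite /mu_sum_agree -big_filter (@perm_big _ _ _ _ _ [:: D]) ?big_seq1 //.
apply: uniq_perm; rewrite ?filter_uniq ?div7_le_enum_uniq // => E.
rewrite mem_filter inE; apply/andP/eqP => [[/allP agreeE /mem_div7_le_enum leED]|->].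
  apply: div7_ext => k v; have [Dkv|/DL/agreeE/eqP //] := eqVneq (D k v) 0%N.
  by apply/eqP; rewrite Dkv -leqn0 (leq_trans (leED k v)) ?Dkv.
by split; [apply/allP | apply/mem_div7_le_enum].
Qed.

Lemma mu_sum_agree_findiff (L : seq ('I_7 * P)) (D : div7 P) : uniq L ->
    (forall a, a \in L -> (0 < D a.1 a.2)%N) ->
  mu_sum_agree D L = findiff (@prim_indicator R P) D L.
Proof.
elim: L D => [|a L IH] D /=; first by move=> _ _; apply: mu_sum_agree_nil.
case/andP=> aL uL DL; rewrite mu_sum_agree_cons ?DL ?mem_head //.
have DL' b : b \in L -> (0 < D b.1 b.2)%N by move=> bL; rewrite DL // inE bL orbT.
rewrite !IH // => b bL; rewrite div7_decE.
case: ifP => [/eqP kvb|_]; last exact: DL'.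
by rewrite -surjective_pairing in kvb; rewrite -kvb bL in aL.
Qed.

Lemma mu_findiff (E : div7 P) (L : seq ('I_7 * P)) :
    uniq L -> (forall a, a \in L -> (0 < E a.1 a.2)%N) ->
    (forall k v, E k v != 0%N -> (k, v) \in L) ->
  mu E = findiff (@prim_indicator R P) E L.
Proof.
by move=> uL posL coverL; rewrite -mu_sum_agree_findiff // mu_sum_agree_cover.
Qed.

End MoebiusInversion.

Section Primitivity.
Variable P : choiceType.

Definition prim_at (D : div7 P) (v : P) : bool := 0%N \in prim_combos D v.

Lemma prim7_eq (X Y : div7 P) :
  (forall v, prim_at X v = prim_at Y v) -> prim7 X = prim7 Y.
Proof.
move=> XY; apply/asboolP/asboolP => prim v.
  by rewrite -[_ \in _]/(prim_at Y v) -XY; apply: prim.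
by rewrite -[_ \in _]/(prim_at X v) XY; apply: prim.
Qed.

Lemma prim_at_zero_pattern (X Y : div7 P) v :
  (forall k, (X k v == 0%N) = (Y k v == 0%N)) -> prim_at X v = prim_at Y v.
Proof.
move=> XY; rewrite /prim_at /prim_combos /E0 /Ei /Fi !inE /index_iota /=.
by rewrite !big_cons !big_nil /= !addn0 !(eq_sym 0%N) !addn_eq0 !XY.
Qed.

(* Every component is omitted from at least one of the seven sums. *)
Lemma prim_at_single (X : div7 P) v k0 :
  (forall k, k != k0 -> X k v = 0%N) -> prim_at X v.
Proof.
move=> X0; have z j : (j < 7)%N -> j != k0 -> X (inord j) v == 0%N.
  by move=> lt_j7 jk0; rewrite X0 //; apply: contra jk0 => /eqP <-; rewrite inordK.
rewrite /prim_at /prim_combos /E0 /Ei /Fi !inE /index_iota /=.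
rewrite !big_cons !big_nil /= !addn0 !(eq_sym 0%N) !addn_eq0.
move: (z 0%N) (z 1%N) (z 2%N) (z 3%N) (z 4%N) (z 5%N) (z 6%N).
case: k0 {X0 z} => -[|[|[|[|[|[|[|//]]]]]]] ? /=;
  by do 7!(first [move=> /(_ isT isT) -> | move=> _]); rewrite ?orbT.
Qed.

End Primitivity.

Section MuSupport.
Variables (P : choiceType) (R : realType) (mu : div7 P -> R).
Hypothesis muS : is_muS mu.
Local Open Scope ring_scope.

Definition div7_atoms (E : div7 P) (U : seq P) : seq ('I_7 * P) :=
  undup [seq (k, v) | v <- U, k <- enum [set k | E k v != 0%N]].

Lemma mem_div7_atoms (E : div7 P) U k v :
  ((k, v) \in div7_atoms E U) = (v \in U) && (E k v != 0%N).
Proof.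
rewrite mem_undup; apply/allpairsPdep/andP => [[v' [k' [Uv' Ek' [-> ->]]]]|[Uv Ekv]].
  by rewrite mem_enum inE in Ek'.
by exists v, k; rewrite mem_enum inE.
Qed.

Lemma size_div7_atoms (E : div7 P) U :
  (size (div7_atoms E U) <= \sum_(v <- U) #|[set k | E k v != 0%N]|)%N.
Proof.
apply: leq_trans (size_undup _) _.
by rewrite size_allpairs_dep sumnE big_map; apply: leq_sum => v _; rewrite cardE.
Qed.

Lemma normr_prim_indicator_le1 (X : div7 P) : `|prim_indicator R X| <= 1.
Proof. by rewrite /prim_indicator; case: (prim7 X); rewrite ?normr1 ?normr0. Qed.

Lemma normr_mu_le (E : div7 P) (U : seq P) :
    (forall k v, E k v != 0%N -> v \in U) ->
  `|mu E| <= 2 ^+ (\sum_(v <- U) #|[set k | E k v != 0%N]|).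
Proof.
move=> EU; rewrite (mu_findiff muS (L := div7_atoms E U)).
- apply: le_trans (findiff_norm_le _ _ normr_prim_indicator_le1) _.
  by rewrite ler_eXn2l ?ltr1n // size_div7_atoms.
- exact: undup_uniq.
- by case=> k v; rewrite mem_div7_atoms lt0n => /andP[].
- by move=> k v Ekv; rewrite mem_div7_atoms Ekv (EU k).
Qed.

Lemma mu_eq0_dec_invariant (E : div7 P) (a : 'I_7 * P) : (0 < E a.1 a.2)%N ->
    (forall X, div7_le X E -> X a.1 a.2 = E a.1 a.2 ->
      prim7 X = prim7 (div7_dec a X)) ->
  mu E = 0.
Proof.
move=> Ea prim_dec; set L := a :: [seq b <- div7_atoms E (div7_supp E) | b != a].
have aL : a \notin behead L by rewrite mem_filter eqxx.
rewrite (mu_findiff muS (L := L)).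
- by apply: findiff_cons_eq0 => // X leXE Xa; rewrite /prim_indicator prim_dec.
- by rewrite /= aL filter_uniq // undup_uniq.
- move=> b; rewrite inE => /predU1P[-> //|]; rewrite mem_filter => /andP[_].
  by case: b => k v; rewrite mem_div7_atoms lt0n => /andP[].
- move=> k v Ekv; rewrite inE mem_filter mem_div7_atoms Ekv (mem_div7_supp Ekv).
  by case: ((k, v) == a).
Qed.

Lemma mu_neq0_le1 (E : div7 P) : mu E != 0 -> forall k v, (E k v <= 1)%N.
Proof.
move=> mu_neq0 k v; rewrite leqNgt; apply: contra mu_neq0 => Ekv_gt1.
apply/eqP/(@mu_eq0_dec_invariant E (k, v)); first exact: ltnW.
move=> X leXE /= Xkv; apply: prim7_eq => w; apply: prim_at_zero_pattern => k'.
rewrite div7_decE; case: ifP => [/eqP[-> ->]|//]; rewrite Xkv.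
by case: (E k v) Ekv_gt1 => [|[|]].
Qed.

(* A point lying on exactly one of the seven divisors does not affect
   primitivity. *)
Lemma mu_neq0_support (E : div7 P) :
  mu E != 0 -> forall v, #|[set k | E k v != 0%N]| != 1%N.
Proof.
move=> mu_neq0 v; apply/negP => /cards1P[k0 supp_v].
have Ek0 k : (k == k0) = (E k v != 0%N) by rewrite -in_set1 -supp_v inE.
have E_k0 : E k0 v = 1%N.
  have := mu_neq0_le1 mu_neq0 k0 v; have := Ek0 k0; rewrite eqxx.
  by case: (E k0 v) => [|[|]].
have Xk0 X k : div7_le X E -> k != k0 -> X k v = 0%N.
  move=> leXE kk0; apply/eqP; rewrite -leqn0 (leq_trans (leXE k v)) // leqn0.
  by apply: contraR kk0; rewrite Ek0.
move/eqP: mu_neq0; apply; apply: (@mu_eq0_dec_invariant E (k0, v)) => [|X leXE _].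
  by rewrite E_k0.
apply: prim7_eq => w; have [->|wv] := eqVneq w v.
  rewrite !(@prim_at_single _ _ v k0) // => k kk0.
    by rewrite div7_decE xpair_eqE (negbTE kk0) Xk0.
  exact: Xk0.
by apply: prim_at_zero_pattern => k; rewrite div7_decE xpair_eqE (negbTE wv) andbF.
Qed.

End MuSupport.

Section PointCount.
Local Open Scope ring_scope.

Lemma norm_weil_root_le (q : nat) (a : algC) :
  (0 < q)%N -> a * a^* = q%:R -> `|a| <= q%:R.
Proof.
move=> q_gt0 aa; rewrite -(@ler_pXn2r _ 2) // ?nnegrE ?normr_ge0 ?ler0n //.
by rewrite normCK aa -natrX ler_nat expnS expn1 leq_pmulr.
Qed.

Lemma points_deg_dvd_enum (P : choiceType) (deg : P -> nat) n :
    (forall v, 0 < deg v)%N ->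
    (forall d, exists s : seq P, uniq s /\ forall v, v \in s <-> deg v = d) ->
  (0 < n)%N -> exists s : seq P, uniq s /\ forall v, v \in s <-> (deg v %| n)%N.
Proof.
move=> deg_gt0 /choice[enum_deg enum_degP] n_gt0.
exists (undup (flatten [seq enum_deg j | j <- iota 1 n & (j %| n)%N])).
split=> [|v]; first exact: undup_uniq.
rewrite mem_undup; split.
  case/flatten_mapP => j; rewrite mem_filter => /andP[j_n _].
  by case: (enum_degP j) => _ /(_ v) [+ _] => /[apply] ->.
move=> v_n; apply/flatten_mapP; exists (deg v); last exact/(enum_degP _).2.
by rewrite mem_filter v_n mem_iota deg_gt0 add1n ltnS dvdn_leq.
Qed.

Lemma card_points_deg_le (q : nat) (P : choiceType) (deg : P -> nat) :
    (0 < q)%N -> curve_points q deg ->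
  exists c : nat, forall (d : nat) (s : seq P), uniq s ->
    (forall v, v \in s -> deg v = d) -> (size s <= c * q ^ d)%N.
Proof.
move=> q_gt0 [deg_gt0 [enum_deg [g [alpha [alpha_norm weil]]]]].
exists (2 * g + 2)%N => -[|d] s s_uniq s_deg.
  case: s s_deg {s_uniq} => // v s /(_ v (mem_head _ _)) deg_v.
  by have := deg_gt0 v; rewrite deg_v.
have [t [t_uniq t_deg]] := points_deg_dvd_enum deg_gt0 enum_deg (ltn0Sn d).
have s_t : (size s <= size t)%N.
  by apply: uniq_leq_size => // v /s_deg deg_v; apply/t_deg; rewrite deg_v.
have t_sum : (size t <= \sum_(v <- t) deg v)%N.
  by rewrite -sum1_size; apply: leq_sum => v _; apply: deg_gt0.
apply: leq_trans s_t (leq_trans t_sum _).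
rewrite -(@ler_nat algC) -normr_nat (weil d.+1 t) //.
have alpha_pow i : `|alpha i ^+ d.+1| <= (q ^ d.+1)%:R.
  by rewrite normrX natrX lerXn2r ?nnegrE ?normr_ge0 ?ler0n ?norm_weil_root_le.
apply: le_trans (ler_normB _ _) _.
apply: le_trans (lerD (ler_normD _ _) (ler_norm_sum _ _ _)) _.
apply: le_trans (lerD (lexx _) (ler_sum _ (fun i _ => alpha_pow i))) _.
rewrite sumr_const card_ord normr1 ger0_norm ?ler0n //.
rewrite -[_ *+ (2 * g)]mulr_natr -natrM natr1 -natrD ler_nat.
have : (0 < q ^ d.+1)%N by rewrite expn_gt0 q_gt0.
set Q := (q ^ d.+1)%N; nia.
Qed.

End PointCount.

Local Open Scope ring_scope.

Lemma geom_sum_le (R : realFieldType) (r : R) n :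
  0 <= r -> r < 1 -> \sum_(d < n) r ^+ d <= (1 - r)^-1.
Proof.
move=> r_ge0 r_lt1; have r1_gt0 : 0 < 1 - r by rewrite subr_gt0.
rewrite -[X in _ <= X]mulr1 ler_pdivlMl // -opprB mulNr -subrX1 opprB.
by rewrite gerBl exprn_ge0.
Qed.

Lemma totdeg_supp_card (P : choiceType) (deg : P -> nat) (E : div7 P)
    (U : {fset P}) :
    (forall k v, E k v != 0%N -> v \in U) -> (forall k v, E k v <= 1)%N ->
  totdeg deg E = (\sum_(v <- U) #|[set k | E k v != 0%N]| * deg v)%N.
Proof.
move=> EU E_le1; rewrite /totdeg /divdeg.
rewrite (eq_bigr (fun k => \sum_(v <- U) E k v * deg v)%N) => [|k _]; last first.
  apply: big_fset_incl => [|v _].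
    by apply/fsubsetP => v; rewrite mem_finsupp; apply: EU.
  by rewrite mem_finsupp negbK => /eqP ->.
rewrite exchange_big /=; apply: eq_bigr => v _.
rewrite -big_distrl /=; congr (_ * _)%N.
rewrite -sum1_card [RHS]big_mkcond /=; apply: eq_bigr => k _.
by rewrite inE; have := E_le1 k v; case: (E k v) => [|[|]].
Qed.

Definition zero_pattern (P : choiceType) (U : {fset P}) (E : div7 P) :
  {ffun U -> {set 'I_7}} := [ffun v : U => [set k | E k (val v) != 0%N]].

Lemma zero_pattern_inj (P : choiceType) (U : {fset P}) (E1 E2 : div7 P) :
    (forall k v, E1 k v != 0%N -> v \in U) -> (forall k v, E2 k v != 0%N -> v \in U) ->
    (forall k v, E1 k v <= 1)%N -> (forall k v, E2 k v <= 1)%N ->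
  zero_pattern U E1 = zero_pattern U E2 -> E1 = E2.
Proof.
move=> E1U E2U E1_le1 E2_le1 eq_pat; apply: div7_ext => k v.
have [vU|vU] := boolP (v \in U); last first.
  by have [/eqP-> /eqP->] : (E1 k v == 0%N) /\ (E2 k v == 0%N)
    by split; apply: contraNT vU; [apply: E1U | apply: E2U].
have /setP/(_ k) := congr1 (fun f : {ffun U -> {set 'I_7}} => f [` vU]%fset) eq_pat; rewrite !ffunE !inE /=.
by move: (E1_le1 k v) (E2_le1 k v); case: (E1 k v) => [|[|]]; case: (E2 k v) => [|[|]].
Qed.

Section EulerProduct.
Variables (R : realType) (P : choiceType) (deg : P -> nat) (x : R).
Hypotheses (x_ge0 : 0 <= x) (x_le1 : x <= 1).

Definition point_weight (v : P) (A : {set 'I_7}) : R :=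
  if A == set0 then 1 else 128 * (x ^+ 2) ^+ deg v.

Lemma point_weight_ge0 v A : 0 <= point_weight v A.
Proof. by rewrite /point_weight; case: ifP; rewrite ?ler01 ?mulr_ge0 ?exprn_ge0. Qed.

Let K : R := #|{: {set 'I_7}}|%:R * 128.

Lemma sum_point_weight_le v :
  \sum_(A : {set 'I_7}) point_weight v A <= expR (K * (x ^+ 2) ^+ deg v).
Proof.
apply: le_trans (expR_ge1Dx _).
rewrite (bigD1 set0) //= {1}/point_weight eqxx lerD2l.
apply: le_trans (_ : _ <= \sum_(A : {set 'I_7}) 128 * (x ^+ 2) ^+ deg v) _.
  rewrite [X in _ <= X](bigD1 set0) //= -[X in X <= _]add0r.
  rewrite lerD ?mulr_ge0 ?exprn_ge0 //.
  by apply: ler_sum => A A0; rewrite /point_weight (negbTE A0).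
by rewrite sumr_const -[_ *+ #|_|]mulr_natl mulrA.
Qed.

Definition pattern_weight (U : {fset P}) (f : {ffun U -> {set 'I_7}}) : R :=
  \prod_(v : U) point_weight (val v) (f v).

Variables (mu : div7 P -> R) (muS : is_muS mu).

(* A point of the support lies on [2 <= a <= 7] components, each with
   multiplicity one, so it contributes [2 ^ a x ^ (a deg v) <= 2 ^ 7 x ^ (2 deg v)]. *)
Lemma mu_weight_le (E : div7 P) (U : {fset P}) :
    (forall k v, E k v != 0%N -> v \in U) -> mu E != 0 ->
  `|mu E| * x ^+ totdeg deg E <= pattern_weight (zero_pattern U E).
Proof.
move=> EU mu_neq0; rewrite (totdeg_supp_card deg EU (mu_neq0_le1 muS mu_neq0)).
apply: le_trans (ler_wpM2r (exprn_ge0 _ x_ge0) (normr_mu_le muS EU)) _.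
rewrite -prodrXr -[X in _ * X <= _]prodrXr -big_split /= big_seq_fsetE /=.
apply: ler_prod => v _; rewrite mulr_ge0 ?exprn_ge0 //= ffunE /point_weight.
case: eqP => [->|/eqP supp_v]; first by rewrite cards0 mul0n !expr0 mulr1.
have a_ge2 : (2 <= #|[set k | E k (val v) != 0%N]|)%N.
  move: (mu_neq0_support muS mu_neq0 (val v)); rewrite -cards_eq0 in supp_v.
  by move: supp_v; case: #|_| => [|[|]].
have a_le7 : (#|[set k | E k (val v) != 0%N]| <= 7)%N.
  by rewrite (leq_trans (max_card _)) ?card_ord.
apply: ler_pM; rewrite ?exprn_ge0 //.
  by rewrite [128](_ : _ = 2 ^+ 7) ?ler_eXn2l ?ltr1n // -natrX.
by rewrite -exprM; apply: ler_wiXn2l => //; rewrite leq_mul2r a_ge2 orbT.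
Qed.

Lemma sum_mu_weight_le (U : {fset P}) (s : seq (div7 P)) : uniq s ->
    (forall E, E \in s -> forall k v, E k v != 0%N -> v \in U) ->
  \sum_(E <- s) `|mu E| * x ^+ totdeg deg E <=
    \sum_(f : {ffun U -> {set 'I_7}}) pattern_weight f.
Proof.
move=> s_uniq sU.
apply: le_trans (_ : _ <= \sum_(E <- s | mu E != 0) pattern_weight (zero_pattern U E)) _.
  rewrite [X in _ <= X]big_mkcond /= !big_seq; apply: ler_sum => E sE.
  case: eqP => [->|/eqP mu_neq0]; first by rewrite normr0 mul0r.
  exact: mu_weight_le (sU E sE) mu_neq0.
rewrite -big_filter -(big_map (zero_pattern U) predT).
set t := map _ _; rewrite big_uniq /=.
  rewrite [X in _ <= X](bigID (mem t)) /= lerDl sumr_ge0 // => f _.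
  by apply: prodr_ge0 => v _; apply: point_weight_ge0.
rewrite map_inj_in_uniq ?filter_uniq // => E1 E2.
rewrite !mem_filter => /andP[mu1 sE1] /andP[mu2 sE2].
exact: zero_pattern_inj (sU E1 sE1) (sU E2 sE2)
  (mu_neq0_le1 muS mu1) (mu_neq0_le1 muS mu2).
Qed.

Lemma sum_pattern_weight_le (U : {fset P}) :
  \sum_(f : {ffun U -> {set 'I_7}}) pattern_weight f <=
    expR (K * \sum_(v : U) (x ^+ 2) ^+ deg (val v)).
Proof.
rewrite /pattern_weight -(bigA_distr_bigA (fun (v : U) A => point_weight (val v) A)) /=.
rewrite mulr_sumr expR_sum; apply: ler_prod => v _.
by rewrite sum_point_weight_le sumr_ge0 // => A _; apply: point_weight_ge0.
Qed.

End EulerProduct.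

Lemma sum_deg_weight_le (R : realType) (P : choiceType) (deg : P -> nat) (y : R)
    (c q : nat) : 0 <= y -> y * q%:R < 1 ->
    (forall (d : nat) (s : seq P), uniq s ->
      (forall v, v \in s -> deg v = d) -> (size s <= c * q ^ d)%N) ->
  forall U : {fset P}, \sum_(v : U) y ^+ deg (val v) <= c%:R * (1 - y * q%:R)^-1.
Proof.
move=> y_ge0 yq_lt1 card_deg U; set n := (\max_(v : U) deg (val v)).+1.
have -> : \sum_(v : U) y ^+ deg (val v) =
    \sum_(d < n) \sum_(v : U | d == deg (val v) :> nat) y ^+ d.
  rewrite (exchange_big_dep xpredT) //=; apply: eq_bigr => v _.
  rewrite big_ord1_eq ltnS.
  by rewrite (@leq_bigmax _ (fun v : U => deg (val v)) v).
apply: le_trans (_ : _ <= \sum_(d < n) c%:R * (y * q%:R) ^+ d) _; last first.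
  by rewrite -mulr_sumr; apply: ler_wpM2l; rewrite ?geom_sum_le ?mulr_ge0.
apply: ler_sum => d _; rewrite sumr_const -[_ *+ #|_|]mulr_natr exprMn -natrX mulrCA.
apply: ler_wpM2l; rewrite ?exprn_ge0 // -natrM ler_nat cardE -(size_map val).
apply: card_deg => [|v /mapP[u]]; first by rewrite map_inj_uniq ?enum_uniq //; apply: val_inj.
by rewrite mem_enum => /eqP -> ->.
Qed.

Lemma mu_series_bounded (R : realType) (P : choiceType) (deg : P -> nat)
    (mu : div7 P -> R) (x : R) (c q : nat) :
    is_muS mu -> 0 <= x -> x <= 1 -> x ^+ 2 * q%:R < 1 ->
    (forall (d : nat) (s : seq P), uniq s ->
      (forall v, v \in s -> deg v = d) -> (size s <= c * q ^ d)%N) ->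
  exists M : R, forall s : seq (div7 P), uniq s ->
    \sum_(E <- s) `|mu E| * x ^+ totdeg deg E <= M.
Proof.
move=> muS x_ge0 x_le1 x2q_lt1 card_deg.
exists (expR (#|{: {set 'I_7}}|%:R * 128 * (c%:R * (1 - x ^+ 2 * q%:R)^-1))).
move=> s s_uniq; set U := (\bigcup_(E <- s) div7_supp E)%fset.
have sU E : E \in s -> forall k v, E k v != 0%N -> v \in U.
  by move=> sE k v /mem_div7_supp Ev; apply/bigfcupP; exists E; rewrite ?sE.
apply: le_trans (sum_mu_weight_le deg x_ge0 x_le1 muS s_uniq sU) _.
apply: le_trans (sum_pattern_weight_le deg x_ge0 U) _.
rewrite ler_expR; apply: ler_wpM2l; first by rewrite mulr_ge0 ?ler0n.
exact: sum_deg_weight_le (exprn_ge0 _ x_ge0) x2q_lt1 card_deg U.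
Qed.

Lemma powR_half_eps_bounds (R : realType) (q eps : R) : 1 < q -> 0 < eps ->
  q `^ (- (2^-1 + eps)) <= 1 /\ (q `^ (- (2^-1 + eps))) ^+ 2 * q < 1.
Proof.
move=> q_gt1 eps_gt0; have q_gt0 : 0 < q by apply: lt_trans q_gt1.
have lnq_gt0 : 0 < ln q by apply: ln_gt0.
rewrite /powR (gt_eqF q_gt0) expR_le1 -expRM_natl -[X in _ * X < _]lnK ?posrE //.
rewrite -expRD expR_lt1 (_ : 2%:R * _ + ln q = - (2 * eps * ln q)); last by field.
by split; [nra | rewrite oppr_lt0 !mulr_gt0].
Qed.

Theorem mainTheorem11 (R : realType) (p k : nat) (P : choiceType)
  (deg : P -> nat) (mu : div7 P -> R) :
  prime p -> (0 < k)%N -> curve_points (p ^ k) deg -> is_muS mu ->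
  forall eps : R, 0 < eps ->
  exists M : R, forall s : seq (div7 P), uniq s ->
    \sum_(E <- s) `|mu E| * ((p ^ k)%:R `^ (- (2^-1 + eps) * (totdeg deg E)%:R))
      <= M.
Proof.
move=> p_prime k_gt0 curve muS eps eps_gt0; set q := (p ^ k)%N.
have q_gt1 : (1 < q)%N by rewrite /q -(exp1n k) ltn_exp2r ?prime_gt1.
have [c card_deg] := card_points_deg_le (ltnW q_gt1) curve.
have q_gt1R : 1 < q%:R :> R by rewrite ltr1n.
have [x_le1 x2q_lt1] := powR_half_eps_bounds q_gt1R eps_gt0.
have [M bounded] := mu_series_bounded muS (powR_ge0 _ _) x_le1 x2q_lt1 card_deg.
exists M => s s_uniq; apply: le_trans (bounded s s_uniq).
rewrite le_eqVlt; apply/predU1l/eq_bigr => E _.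
by rewrite powRrM powR_mulrn ?powR_ge0.
Qed.
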